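(* Let $\lambda$ be any one of the four functions $\mu,\mu^*,\nu,\nu^*$. Then for all positive integers $n_1,n_2,m$ (with additionally $n_1,n_2\ge m$ when $\lambda=\mu^*$ or $\lambda=\nu^*$), $$\lambda(n_1+n_2,m)\le \lambda(n_1,m)+\lambda(n_2,m).$$
   Context: Let $\mathbb F_2=\{0,1\}$ be the field with two elements. For $u\in\mathbb F_2^n$, $|u|$ denotes the Hamming weight of $u$. A wiring on $n$ vertices is a matrix $W=(w_{i,j})\in M(n,n;\mathbb F_2)$ with $w_{i,i}=1$ for all $i$. The degree of vertex $j$ is the number of $1$s in the $j$th column of $W$, and $\deg(W)$ is the maximum degree over all vertices. For $c\in\mathbb F_2^n$, $M(W,c)=\max\{|Wx+c| : x\in\mathbb F_2^n\}$. For $n,m\ge1$, $A(n,m)$ is the set of wirings on $n$ vertices with $\deg(W)\le m$; for $n\ge m$, $A^*(n,m)$ is the set of wirings on $n$ vertices in which every vertex has degree exactly $m$. Define $\mu(n,m)=\min\{M(W,0): W\in A(n,m)\}$, $\nu(n,m)=\min\{M(W,c): W\in A(n,m),\ c\in\mathbb F_2^n\}$, and for $n\ge m$, $\mu^*(n,m)=\min\{M(W,0): W\in A^*(n,m)\}$, $\nu^*(n,m)=\min\{M(W,c): W\in A^*(n,m),\ c\in\mathbb F_2^n\}$. *)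

From mathcomp Require Import all_boot all_order all_algebra.
Set Implicit Arguments. Unset Strict Implicit. Unset Printing Implicit Defensive.
Import GRing.Theory.
Local Open Scope ring_scope.

Definition hweight (n : nat) (u : 'cV['F_2]_n) : nat := #|[set i | u i 0 != 0]|.

Definition is_wiring (n : nat) (W : 'M['F_2]_n) : bool := [forall i, W i i == 1].

Definition vdeg (n : nat) (W : 'M['F_2]_n) (j : 'I_n) : nat := #|[set i | W i j != 0]|.

Definition wdeg (n : nat) (W : 'M['F_2]_n) : nat := \max_(j : 'I_n) vdeg W j.

Definition Mval (n : nat) (W : 'M['F_2]_n) (c : 'cV['F_2]_n) : nat :=
  \max_(x : 'cV['F_2]_n) hweight (W *m x + c).

Definition inA (n m : nat) (W : 'M['F_2]_n) : bool := is_wiring W && (wdeg W <= m)%N.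
Definition inAstar (n m : nat) (W : 'M['F_2]_n) : bool :=
  is_wiring W && [forall j, vdeg W j == m].

(* Minima over finite sets; the default value n is only reached when the set
   is empty, which never happens in the range where the functions are defined
   (n,m >= 1, and n >= m for the starred versions). *)
Definition mu (n m : nat) : nat :=
  \big[minn/n]_(W : 'M['F_2]_n | inA m W) Mval W 0.
Definition nu (n m : nat) : nat :=
  \big[minn/n]_(W : 'M['F_2]_n | inA m W) \big[minn/n]_(c : 'cV['F_2]_n) Mval W c.
Definition mustar (n m : nat) : nat :=
  \big[minn/n]_(W : 'M['F_2]_n | inAstar m W) Mval W 0.
Definition nustar (n m : nat) : nat :=
  \big[minn/n]_(W : 'M['F_2]_n | inAstar m W) \big[minn/n]_(c : 'cV['F_2]_n) Mval W c.

From mathcomp Require Import all_boot all_order all_algebra.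
Set Implicit Arguments. Unset Strict Implicit. Unset Printing Implicit Defensive.
Import Order.TTheory GRing.Theory.

(* Each minimum on n1 + n2 vertices is at most its value at the block-diagonal
   sum of optimal wirings on n1 and n2 vertices (with concatenated optimal
   shift vectors): the sum is again a wiring of the same degree type, and
   |[W1 0; 0 W2] (x1; x2) + (c1; c2)| splits as |W1 x1 + c1| + |W2 x2 + c2|.
   The minima are attained because the classes are inhabited: the identity lies
   in A(n, m), and the circulant with m consecutive ones per column in A*(n, m). *)

Lemma bigmin_subadditive (I1 I2 I : finType) (P1 : pred I1) (P2 : pred I2) (P : pred I)
    (F1 : I1 -> nat) (F2 : I2 -> nat) (F : I -> nat) (d1 d2 d : nat)
    (join : I1 -> I2 -> I) (i1 : I1) (i2 : I2) :
  P1 i1 -> P2 i2 ->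
  (forall i, P1 i -> F1 i <= d1) -> (forall i, P2 i -> F2 i <= d2) ->
  (forall a b, P1 a -> P2 b -> P (join a b) /\ F (join a b) <= F1 a + F2 b) ->
  \big[minn/d]_(i | P i) F i <=
    \big[minn/d1]_(i | P1 i) F1 i + \big[minn/d2]_(i | P2 i) F2 i.
Proof.
(* The bounds by the defaults make each minimum attained. *)
move=> P1i1 P2i2 F1_le F2_le join_le.
have [a P1a ->] := @eq_bigmin _ nat _ d1 _ _ F1 P1i1 F1_le.
have [b P2b ->] := @eq_bigmin _ nat _ d2 _ _ F2 P2i2 F2_le.
have [Pab Fab_le] := join_le a b P1a P2b.
exact: (@bigmin_inf _ nat _ d _ _ _ F Pab Fab_le).
Qed.
Arguments bigmin_subadditive {I1 I2 I P1 P2 P F1 F2 F d1 d2 d} join {i1 i2}.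

Lemma card_set_sum (T : finType) (P : pred T) : #|[set i | P i]| = \sum_i P i.
Proof. by rewrite -sum1_card big_mkcond; apply: eq_bigr => i _; rewrite inE. Qed.

Lemma sum_ord_ltn n m : m <= n -> \sum_(k < n) (k < m) = m.
Proof.
move=> le_mn; rewrite -(big_mkord xpredT (fun k => nat_of_bool (k < m))).
rewrite -[RHS](card_ord m) -sum1_card -(big_mkord xpredT (fun _ => 1)).
rewrite (big_nat_widen _ _ _ _ _ le_mn) big_mkcondr /=.
by apply: eq_bigr => k _; case: (k < m).
Qed.

Definition diag_block (R : nmodType) n1 n2 (A : 'M[R]_n1) (B : 'M[R]_n2) :
  'M[R]_(n1 + n2) := block_mx A 0%R 0%R B.

Lemma hweight_col_mx n1 n2 (u1 : 'cV['F_2]_n1) (u2 : 'cV['F_2]_n2) :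
  hweight (col_mx u1 u2) = hweight u1 + hweight u2.
Proof.
rewrite /hweight !card_set_sum big_split_ord /=.
by congr (_ + _); apply: eq_bigr => i _; rewrite ?col_mxEu ?col_mxEd.
Qed.

Lemma hweight_ub n (u : 'cV['F_2]_n) : hweight u <= n.
Proof. by rewrite /hweight -[leqRHS]card_ord max_card. Qed.

Lemma Mval_ub n (W : 'M['F_2]_n) c : Mval W c <= n.
Proof. by apply/bigmax_leqP => x _; apply: hweight_ub. Qed.

Lemma Mval_diag_block n1 n2 (W1 : 'M['F_2]_n1) (W2 : 'M['F_2]_n2) c1 c2 :
  Mval (diag_block W1 W2) (col_mx c1 c2) <= Mval W1 c1 + Mval W2 c2.
Proof.
apply/bigmax_leqP => x _; rewrite -(vsubmxK x) mul_block_col !mul0mx addr0 add0r.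
by rewrite add_col_mx hweight_col_mx; apply: leq_add; apply: leq_bigmax.
Qed.

Lemma vdeg_diag_block_lshift n1 n2 (W1 : 'M['F_2]_n1) (W2 : 'M['F_2]_n2) j :
  vdeg (diag_block W1 W2) (lshift n2 j) = vdeg W1 j.
Proof.
rewrite /vdeg !card_set_sum big_split_ord /= [X in _ + X]big1 ?addn0.
  by apply: eq_bigr => i _; rewrite block_mxEul.
by move=> i _; rewrite block_mxEdl mxE eqxx.
Qed.

Lemma vdeg_diag_block_rshift n1 n2 (W1 : 'M['F_2]_n1) (W2 : 'M['F_2]_n2) j :
  vdeg (diag_block W1 W2) (rshift n1 j) = vdeg W2 j.
Proof.
rewrite /vdeg !card_set_sum big_split_ord /= big1 ?add0n.
  by apply: eq_bigr => i _; rewrite block_mxEdr.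
by move=> i _; rewrite block_mxEur mxE eqxx.
Qed.

Lemma is_wiring_diag_block n1 n2 (W1 : 'M['F_2]_n1) (W2 : 'M['F_2]_n2) :
  is_wiring W1 -> is_wiring W2 -> is_wiring (diag_block W1 W2).
Proof.
move=> /forallP W1_diag /forallP W2_diag; apply/forallP => i.
by case: (split_ordP i) => k ->; rewrite ?block_mxEul ?block_mxEdr.
Qed.

Lemma inA_diag_block n1 n2 m (W1 : 'M['F_2]_n1) (W2 : 'M['F_2]_n2) :
  inA m W1 -> inA m W2 -> inA m (diag_block W1 W2).
Proof.
move=> /andP[W1_wiring W1_deg] /andP[W2_wiring W2_deg].
rewrite /inA is_wiring_diag_block //=; apply/bigmax_leqP => j _.
case: (split_ordP j) => k ->.
  by rewrite vdeg_diag_block_lshift (leq_trans _ W1_deg) ?leq_bigmax.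
by rewrite vdeg_diag_block_rshift (leq_trans _ W2_deg) ?leq_bigmax.
Qed.

Lemma inAstar_diag_block n1 n2 m (W1 : 'M['F_2]_n1) (W2 : 'M['F_2]_n2) :
  inAstar m W1 -> inAstar m W2 -> inAstar m (diag_block W1 W2).
Proof.
move=> /andP[W1_wiring /forallP W1_deg] /andP[W2_wiring /forallP W2_deg].
rewrite /inAstar is_wiring_diag_block //=; apply/forallP => j.
case: (split_ordP j) => k ->.
  by rewrite vdeg_diag_block_lshift.
by rewrite vdeg_diag_block_rshift.
Qed.

Lemma inA_identity n m : 0 < m -> inA m ((1%:M)%R : 'M['F_2]_n).
Proof.
move=> m_gt0; apply/andP; split; first by apply/forallP => i; rewrite mxE eqxx.
apply/bigmax_leqP => j _; rewrite /vdeg.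
have -> : [set i | ((1%:M)%R : 'M['F_2]_n) i j != 0%R] = [set j].
  by apply/setP => i; rewrite !inE mxE; case: (i == j); rewrite ?oner_neq0 ?eqxx.
by rewrite cards1.
Qed.

Definition circulant n m : 'M['F_2]_n :=
  \matrix_(i, j) (((i + n - j) %% n < m)%N%:R)%R.

Lemma inAstar_circulant n m : 0 < m -> m <= n -> inAstar m (circulant n m).
Proof.
move=> m_gt0 le_mn; have n_gt0 : 0 < n by apply: leq_trans le_mn.
have F2_nat_bool (b : bool) : ((b%:R)%R : 'F_2) != 0%R = b.
  by case: b; rewrite ?oner_neq0 ?eqxx.
apply/andP; split; first by apply/forallP => i; rewrite mxE addKn modnn m_gt0.
apply/forallP => j; rewrite /vdeg card_set_sum.
under eq_bigr do rewrite mxE F2_nat_bool.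
pose shift (i : 'I_n) : 'I_n := Ordinal (ltn_pmod (i + n - j) n_gt0).
have shift_inj : injective shift.
  move=> a b /(congr1 val) /= /eqP.
  rewrite -!addnBA ?(ltnW (ltn_ord j)) // eqn_modDr !modn_small // => /eqP.
  exact: val_inj.
by apply/eqP; rewrite -[RHS](sum_ord_ltn le_mn) [RHS](reindex_inj shift_inj).
Qed.

Definition Mval_min n (W : 'M['F_2]_n) : nat := \big[minn/n]_(c : 'cV['F_2]_n) Mval W c.

Lemma Mval_min_diag_block n1 n2 (W1 : 'M['F_2]_n1) (W2 : 'M['F_2]_n2) :
  Mval_min (diag_block W1 W2) <= Mval_min W1 + Mval_min W2.
Proof.
apply: (bigmin_subadditive (@col_mx _ n1 n2 1) (i1 := 0%R) (i2 := 0%R)) => //.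
- by move=> c _; apply: Mval_ub.
- by move=> c _; apply: Mval_ub.
- by move=> c1 c2 _ _; split; last exact: Mval_diag_block.
Qed.

Section WiringClass.

Variable Q : forall n, pred 'M['F_2]_n.
Hypothesis Q_diag_block : forall n1 n2 (W1 : 'M['F_2]_n1) (W2 : 'M['F_2]_n2),
  Q W1 -> Q W2 -> Q (diag_block W1 W2).

Variables (n1 n2 : nat) (W1 : 'M['F_2]_n1) (W2 : 'M['F_2]_n2).
Hypotheses (QW1 : Q W1) (QW2 : Q W2).

Lemma bigmin_Mval0_subadditive :
  \big[minn/(n1 + n2)]_(W : 'M['F_2]_(n1 + n2) | Q W) Mval W 0%R <=
    \big[minn/n1]_(W : 'M['F_2]_n1 | Q W) Mval W 0%R +
    \big[minn/n2]_(W : 'M['F_2]_n2 | Q W) Mval W 0%R.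
Proof.
apply: (bigmin_subadditive (@diag_block _ n1 n2) QW1 QW2).
- by move=> W _; apply: Mval_ub.
- by move=> W _; apply: Mval_ub.
- move=> A B QA QB; split; first exact: Q_diag_block.
  by rewrite -col_mx0 Mval_diag_block.
Qed.

Lemma bigmin_Mval_min_subadditive :
  \big[minn/(n1 + n2)]_(W : 'M['F_2]_(n1 + n2) | Q W) Mval_min W <=
    \big[minn/n1]_(W : 'M['F_2]_n1 | Q W) Mval_min W +
    \big[minn/n2]_(W : 'M['F_2]_n2 | Q W) Mval_min W.
Proof.
apply: (bigmin_subadditive (@diag_block _ n1 n2) QW1 QW2).
- by move=> W _; exact: (@bigmin_le_id _ nat).
- by move=> W _; exact: (@bigmin_le_id _ nat).
- move=> A B QA QB; split; first exact: Q_diag_block.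
  exact: Mval_min_diag_block.
Qed.

End WiringClass.

Theorem corollary3p3 :
  (forall n1 n2 m : nat, (0 < n1)%N -> (0 < n2)%N -> (0 < m)%N ->
     (mu (n1 + n2) m <= mu n1 m + mu n2 m)%N) /\
  (forall n1 n2 m : nat, (0 < n1)%N -> (0 < n2)%N -> (0 < m)%N ->
     (nu (n1 + n2) m <= nu n1 m + nu n2 m)%N) /\
  (forall n1 n2 m : nat, (0 < n1)%N -> (0 < n2)%N -> (0 < m)%N ->
     (m <= n1)%N -> (m <= n2)%N ->
     (mustar (n1 + n2) m <= mustar n1 m + mustar n2 m)%N) /\
  (forall n1 n2 m : nat, (0 < n1)%N -> (0 < n2)%N -> (0 < m)%N ->
     (m <= n1)%N -> (m <= n2)%N ->
     (nustar (n1 + n2) m <= nustar n1 m + nustar n2 m)%N).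
Proof.
have inA_class m := fun n1 n2 => @inA_diag_block n1 n2 m.
have inAstar_class m := fun n1 n2 => @inAstar_diag_block n1 n2 m.
split; [|split; [|split]] => n1 n2 m _ _ m_gt0.
- exact (bigmin_Mval0_subadditive (inA_class m)
    (inA_identity n1 m_gt0) (inA_identity n2 m_gt0)).
- exact (bigmin_Mval_min_subadditive (inA_class m)
    (inA_identity n1 m_gt0) (inA_identity n2 m_gt0)).
- move=> le_mn1 le_mn2.
  exact (bigmin_Mval0_subadditive (inAstar_class m)
    (inAstar_circulant m_gt0 le_mn1) (inAstar_circulant m_gt0 le_mn2)).
- move=> le_mn1 le_mn2.
  exact (bigmin_Mval_min_subadditive (inAstar_class m)
    (inAstar_circulant m_gt0 le_mn1) (inAstar_circulant m_gt0 le_mn2)).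
Qed.
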